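(* In the non-contextual setting of the auction problem described in the context (a fixed set of $N$ ads participating at every round, with constant CTRs $\rho_{t,i}=\rho_i\in[0,1]$ for all $t$), run the exponential-weights algorithm with the IPS loss estimator described in the context on the predictor class $\widehat{\mathcal{F}}=\{(x,i)\mapsto\theta_i:\theta\in\{0,\tfrac1T,\tfrac2T,\dots,1\}^N\}$ with learning rate $\eta=\sqrt{\frac{\log T}{T}}$. Then $\mathbb{E}[\mathrm{Reg}]\le O(N\sqrt{T\log T})$.
   Context: Notation: for a vector $v$, $\mathrm{smax}_i v_i$ denotes the second-largest entry, and $\arg\max_i v_i$, $\arg\mathrm{smax}_i v_i$ the indices of the largest and second-largest entries; ties are broken by a fixed deterministic rule. Problem: There are $T$ rounds. At each round $t$ the learner (possibly after observing a context $x_t$, which here is irrelevant) chooses estimated CTRs $\tilde\rho_t\in[0,1]^N$; simultaneously each bidder $i$ chooses a bid $b_{t,i}\in[0,1]$ (possibly adversarially and adaptively, without knowing $\tilde\rho_t$). The winner is $i_t=\arg\max_i b_{t,i}\tilde\rho_{t,i}$, the runner-up $j_t=\arg\mathrm{smax}_i b_{t,i}\tilde\rho_{t,i}$, the payment per click $d_t=b_{t,j_t}\tilde\rho_{t,j_t}/\tilde\rho_{t,i_t}$; the ad $i_t$ is clicked with probability $\rho_{i_t}$ (unknown true CTR). The learner observes $b_t$ and the click indicator $c_t\in\{0,1\}$ and receives $c_td_t$. Regret: $\mathrm{Reg}=\sum_{t=1}^T\mathrm{smax}_i b_{t,i}\rho_i-\sum_{t=1}^T c_td_t$. Algorithm (exponential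 weights with IPS): given a finite class $\mathcal{F}$ of functions $f:\mathcal{X}\times[N]\to[0,1]$ and $\eta>0$, at round $t$ sample $f_t\sim q_t$ with $q_{t,f}\propto\exp(-\eta\sum_{s<t}\hat\ell_{s,f})$, set $\tilde\rho_{t,i}=f_t(x_t,i)$, run the auction, and define for each $f\in\mathcal{F}$ $$\hat\ell_{t,f}=\frac{\mathbb{1}\{i_t=\arg\max_i b_{t,i}f(x_t,i)\}}{p_{t,i_t}}\Big(1-c_t\frac{\mathrm{smax}_j b_{t,j}f(x_t,j)}{f(x_t,i_t)}\Big),\quad p_{t,i}=\Pr_{f_t\sim q_t}\{i_t=i\}.$$ *)

From mathcomp Require Import all_boot all_order all_algebra.
From mathcomp Require Import reals.
From mathcomp Require Import sequences exp.
Set Implicit Arguments. Unset Strict Implicit. Unset Printing Implicit Defensive.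
Import Order.TTheory GRing.Theory Num.Theory.
Local Open Scope ring_scope.

Section Auction.
Variable R : realType.
Variables N T : nat.

(* The discretized predictor class: theta in {0,1/T,...,1}^N, i.e.
   f_theta(x,i) = theta_i (context ignored: non-contextual setting). *)
Definition theta_class : finType := {ffun 'I_N -> 'I_T.+1}.
Definition pred_of (th : theta_class) (i : 'I_N) : R := (th i)%:R / T%:R.

Definition is_argmax (am : ('I_N -> R) -> 'I_N) :=
  forall v i, v i <= v (am v).
Definition is_argsmax (am asm : ('I_N -> R) -> 'I_N) :=
  forall v, asm v != am v /\ (forall i, i != am v -> v i <= v (asm v)).

Variables am asm : ('I_N -> R) -> 'I_N.

(* one round of history: (bids, sampled predictor f_t, click c_t) *)
Definition hist_item := (('I_N -> R) * theta_class * bool)%type.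
(* a deterministic adaptive adversary: maps past history (most recent
   first) to the bid vector of the current round *)
Definition adversary := seq hist_item -> ('I_N -> R).

Definition scores (b : 'I_N -> R) (f : theta_class) : 'I_N -> R :=
  fun i => b i * pred_of f i.

Definition weight (eta : R) (L : theta_class -> R) (f : theta_class) : R :=
  expR (- eta * L f) / \sum_(g : theta_class) expR (- eta * L g).

Definition winner (b : 'I_N -> R) (f : theta_class) : 'I_N := am (scores b f).

Definition winprob (eta : R) (L : theta_class -> R) (b : 'I_N -> R) (i : 'I_N) : R :=
  \sum_(f : theta_class | winner b f == i) weight eta L f.

Definition payment (b : 'I_N -> R) (f : theta_class) : R :=
  scores b f (asm (scores b f)) / pred_of f (winner b f).

Definition loss_est (eta : R) (L : theta_class -> R) (b : 'I_N -> R)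
  (ft : theta_class) (c : bool) (f : theta_class) : R :=
  let it := winner b ft in
  if winner b f == it then
    (1 - c%:R * (scores b f (asm (scores b f)) / pred_of f it))
      / winprob eta L b it
  else 0.

Definition click_prob (rho : 'I_N -> R) (i : 'I_N) (c : bool) : R :=
  if c then rho i else 1 - rho i.

Definition smax_val (b rho : 'I_N -> R) : R :=
  let v := fun i => b i * rho i in v (asm v).

(* expected value of sum_{remaining k rounds} (smax_i b_i rho_i - c_t d_t),
   given past history hist and cumulated loss estimates L *)
Fixpoint exp_regret (eta : R) (rho : 'I_N -> R) (adv : adversary)
  (k : nat) (hist : seq hist_item) (L : theta_class -> R) : R :=
  match k with
  | 0 => 0
  | k'.+1 =>
    let b := adv hist in
    \sum_(f : theta_class) weight eta L f *
      \sum_(c : bool) click_prob rho (winner b f) c *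
        (smax_val b rho - c%:R * payment b f
         + exp_regret eta rho adv k' ((b, f, c) :: hist)
             (fun g => L g + loss_est eta L b f c g))
  end.

Definition expected_regret (rho : 'I_N -> R) (adv : adversary) : R :=
  exp_regret (Num.sqrt (ln T%:R / T%:R)) rho adv T [::] (fun _ => 0).

End Auction.

From mathcomp Require Import all_boot all_order all_algebra.
From mathcomp Require Import reals.
From mathcomp Require Import sequences exp.
From mathcomp Require Import lra ring.
Set Implicit Arguments. Unset Strict Implicit. Unset Printing Implicit Defensive.
Import Order.TTheory GRing.Theory Num.Theory.
Local Open Scope ring_scope.

(* For the potential Psi(L) = ln (sum_g exp (-eta L_g)) / eta + L_fs, the
   bounds ln x <= x - 1 and exp (-x) <= 1 - x + x^2 give, for nonnegative losses l,
   Psi(L + l) <= Psi(L) - <q, l> + eta <q, l^2> + l_fs, with q the exponential weights.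
   For the inverse-propensity estimates of one auction round, E[l_g] is the true expected loss
   of g, so E[<q, l>] = 1 - E[c d] cancels the learner's revenue, and E[<q, l^2>] is at most
   sum_i p_i / p_i <= N.  Hence a round costs at most the expected drop of Psi, plus eta N,
   plus the regret of fs in that round.  The comparator fs = floor(T rho) / T loses at most
   1/T per round; telescoping with Psi >= 0 and Psi(0) = N ln (T + 1) / eta leaves
   N ln (T + 1) / eta + eta N T + 1 = O(N sqrt (T ln T)). *)

Section ExpWeights.
Variables (R : realType) (F : finType) (eta : R).
Hypothesis F_nonempty : (0 < #|F|)%N.

Definition expw_sum (L : F -> R) : R := \sum_g expR (- eta * L g).

Definition expw (L : F -> R) (f : F) : R := expR (- eta * L f) / expw_sum L.

Lemma expR_le_expw_sum (L : F -> R) (f : F) : expR (- eta * L f) <= expw_sum L.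
Proof.
rewrite /expw_sum (bigD1 f) //= lerDl.
by apply: sumr_ge0 => g _; exact: expR_ge0.
Qed.

Lemma expw_sum_gt0 (L : F -> R) : 0 < expw_sum L.
Proof.
have [f _] := card_gt0P F_nonempty.
exact: lt_le_trans (expR_gt0 _) (expR_le_expw_sum L f).
Qed.

Lemma expw_gt0 (L : F -> R) (f : F) : 0 < expw L f.
Proof. by rewrite divr_gt0 ?expR_gt0 ?expw_sum_gt0. Qed.

Lemma sum_expw (L : F -> R) : \sum_f expw L f = 1.
Proof. by rewrite -mulr_suml divff // gt_eqF // expw_sum_gt0. Qed.

Lemma expw_sumD (L l : F -> R) :
  expw_sum (fun g => L g + l g) = expw_sum L * \sum_g expw L g * expR (- eta * l g).
Proof.
rewrite mulr_sumr; apply: eq_bigr => g _.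
rewrite mulrA mulrCA divff ?mulr1 ?gt_eqF ?expw_sum_gt0 //.
by rewrite mulrDr expRD.
Qed.

Lemma expRN_le (x : R) : 0 <= x -> expR (- x) <= 1 - x + x ^+ 2.
Proof.
move=> x_ge0.
have half_ge0 : 0 <= 1 + x / 2 by rewrite addr_ge0 ?divr_ge0.
have sq_le : (1 + x / 2) ^+ 2 <= expR x.
  by rewrite [x in expR x]splitr expRD expr2 ler_pM ?expR_ge1Dx.
rewrite expRN -[_^-1]mul1r ler_pdivrMr ?expR_gt0 //.
have q_ge0 : 0 <= 1 - x + x ^+ 2 by rewrite expr2; nra.
apply: le_trans (ler_wpM2l q_ge0 sq_le); rewrite !expr2; nra.
Qed.

Variable fs : F.

Definition potential (L : F -> R) : R := ln (expw_sum L) / eta + L fs.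

Lemma potential0 : potential (fun _ => 0) = ln #|F|%:R / eta.
Proof.
rewrite /potential /expw_sum addr0.
by under eq_bigr do rewrite mulr0 expR0; rewrite sumr_const.
Qed.

Hypothesis eta_gt0 : 0 < eta.

Lemma potential_ge0 (L : F -> R) : 0 <= potential L.
Proof.
have le_ln : - eta * L fs <= ln (expw_sum L).
  by rewrite -ler_expR lnK ?posrE ?expw_sum_gt0 ?expR_le_expw_sum.
have : - L fs <= ln (expw_sum L) / eta by rewrite ler_pdivlMr // mulNr mulrC -mulNr.
rewrite /potential; lra.
Qed.

Lemma potentialD (L l : F -> R) : (forall g, 0 <= l g) ->
  potential (fun g => L g + l g) <=
  potential L - \sum_g expw L g * l g + eta * \sum_g expw L g * l g ^+ 2 + l fs.
Proof.
move=> l_ge0.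
set m1 := \sum_g expw L g * l g; set m2 := \sum_g expw L g * l g ^+ 2.
set S := \sum_g expw L g * expR (- eta * l g).
have S_gt0 : 0 < S.
  by move: (expw_sum_gt0 (fun g => L g + l g)); rewrite expw_sumD pmulr_rgt0 ?expw_sum_gt0.
have S_le : S <= 1 - eta * m1 + eta * (eta * m2).
  have -> : 1 - eta * m1 + eta * (eta * m2) =
      \sum_g expw L g * (1 - eta * l g + (eta * l g) ^+ 2).
    rewrite /m1 /m2 !mulr_sumr -[in LHS](sum_expw L) -sumrB -big_split /=.
    by apply: eq_bigr => g _; ring.
  apply: ler_sum => g _; rewrite ler_pM2l ?expw_gt0 // mulNr.
  by apply: expRN_le; exact: mulr_ge0 (ltW eta_gt0) (l_ge0 g).
have lnS_le : ln S <= S - 1 by rewrite -[S in ln S](subrKC 1) le_ln1Dx //; lra.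
have : ln S / eta <= - m1 + eta * m2 by rewrite ler_pdivrMr //; nra.
rewrite /potential expw_sumD lnM ?posrE ?expw_sum_gt0 // mulrDl; lra.
Qed.

End ExpWeights.

Lemma card_theta_class_gt0 (N T : nat) : (0 < #|theta_class N T|)%N.
Proof. by rewrite card_ffun !card_ord expn_gt0. Qed.

Section Round.
Variables (R : realType) (N T : nat) (am asm : ('I_N -> R) -> 'I_N).
Hypothesis am_max : is_argmax am.
Variables (eta : R) (rho b : 'I_N -> R) (L : theta_class N T -> R).
Hypotheses (rho01 : forall i, 0 <= rho i <= 1) (b01 : forall i, 0 <= b i <= 1).

Local Notation F := (theta_class N T).
Local Notation w := (weight eta L).
Local Notation win := (winner am b).
Local Notation pay := (payment am asm b).
Local Notation p := (winprob am eta L b).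
Local Notation lh := (loss_est am asm eta L b).

Lemma weightE : w = expw eta L.
Proof. by []. Qed.

Lemma weight_gt0 (f : F) : 0 < w f.
Proof. by rewrite weightE expw_gt0 ?card_theta_class_gt0. Qed.

Lemma sum_weight : \sum_f w f = 1.
Proof. by rewrite weightE sum_expw ?card_theta_class_gt0. Qed.

Lemma winprob_gt0 (f : F) : 0 < p (win f).
Proof.
rewrite /winprob (bigD1 f) //= ltr_pwDl ?weight_gt0 //.
by apply: sumr_ge0 => g _; exact: ltW (weight_gt0 g).
Qed.

Lemma click_prob_ge0 i c : 0 <= click_prob rho i c.
Proof. by have := rho01 i; case: c => /= /andP[]; lra. Qed.

Lemma sum_click_prob i : \sum_c click_prob rho i c = 1.
Proof. by rewrite big_bool /=; ring. Qed.

Lemma pred_of_ge0 (f : F) i : 0 <= pred_of R f i.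
Proof. by rewrite divr_ge0 ?ler0n. Qed.

Lemma scores_ge0 (f : F) i : 0 <= scores b f i.
Proof. by rewrite mulr_ge0 ?pred_of_ge0 //; case/andP: (b01 i). Qed.

Lemma payment_ge0 (f : F) : 0 <= pay f.
Proof. by rewrite divr_ge0 ?scores_ge0 ?pred_of_ge0. Qed.

(* d = b_j f_j / f_i <= b_i f_i / f_i = b_i, since i maximizes the scores. *)
Lemma payment_le1 (f : F) : pay f <= 1.
Proof.
rewrite /payment /winner; set v := scores b f; set i := am v.
have [->|pi_neq0] := eqVneq (pred_of R f i) 0; first by rewrite invr0 mulr0.
have pi_gt0 : 0 < pred_of R f i by rewrite lt_def pi_neq0 pred_of_ge0.
rewrite ler_pdivrMr // mul1r; apply: le_trans (am_max v (asm v)) _.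
by rewrite ler_piMl ?pred_of_ge0 //; case/andP: (b01 i).
Qed.

Lemma click_loss_itv (f : F) (c : bool) : 0 <= 1 - c%:R * pay f <= 1.
Proof.
have := payment_ge0 f; have := payment_le1 f.
by case: c => /= *; apply/andP; split; lra.
Qed.

Lemma loss_estE (ft : F) c (f : F) : lh ft c f =
  if win f == win ft then (1 - c%:R * pay f) / p (win f) else 0.
Proof. by rewrite /loss_est; case: eqP => // eq_win; rewrite /payment -eq_win. Qed.

Lemma loss_est_ge0 ft c f : 0 <= lh ft c f.
Proof.
rewrite loss_estE; case: ifP => // _.
by case/andP: (click_loss_itv f c) => ? _; rewrite divr_ge0 ?(ltW (winprob_gt0 f)).
Qed.

Definition round_expect (X : F -> bool -> R) : R :=
  \sum_f w f * \sum_c click_prob rho (win f) c * X f c.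

Lemma round_expect_le X Y : (forall f c, X f c <= Y f c) ->
  round_expect X <= round_expect Y.
Proof.
move=> le_XY; apply: ler_sum => f _; rewrite ler_pM2l ?weight_gt0 //.
by apply: ler_sum => c _; rewrite ler_wpM2l ?click_prob_ge0.
Qed.

Lemma round_expect_const k : round_expect (fun _ _ => k) = k.
Proof.
rewrite /round_expect; under eq_bigr do rewrite -mulr_suml sum_click_prob mul1r.
by rewrite -mulr_suml sum_weight mul1r.
Qed.

Lemma round_expectD X Y :
  round_expect (fun f c => X f c + Y f c) = round_expect X + round_expect Y.
Proof.
rewrite /round_expect -big_split /=; apply: eq_bigr => f _.
rewrite -mulrDr -big_split /=; congr (_ * _).
by apply: eq_bigr => c _; rewrite mulrDr.
Qed.

Lemma round_expectB X Y :
  round_expect (fun f c => X f c - Y f c) = round_expect X - round_expect Y.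
Proof.
rewrite /round_expect -sumrB; apply: eq_bigr => f _.
by rewrite -mulrBr -sumrB; congr (_ * _); apply: eq_bigr => c _; rewrite mulrBr.
Qed.

Lemma round_expectZ k X :
  round_expect (fun f c => k * X f c) = k * round_expect X.
Proof.
rewrite /round_expect mulr_sumr; apply: eq_bigr => f _.
rewrite [RHS]mulrCA [k * _]mulr_sumr; congr (_ * _).
by apply: eq_bigr => c _; rewrite mulrCA.
Qed.

Lemma round_expect_sum (X : F -> F -> bool -> R) :
  round_expect (fun f c => \sum_g X g f c) = \sum_g round_expect (X g).
Proof.
rewrite /round_expect exchange_big /=; apply: eq_bigr => f _.
rewrite -mulr_sumr exchange_big /=; congr (_ * _).
by apply: eq_bigr => c _; rewrite mulr_sumr.
Qed.

Lemma round_expect_click (X : F -> R) :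
  round_expect (fun f c => c%:R * X f) = \sum_f w f * (rho (win f) * X f).
Proof. by apply: eq_bigr => f _; rewrite big_bool /=; ring. Qed.

Lemma loss_est_unbiased (g : F) :
  round_expect (fun f c => lh f c g) = 1 - rho (win g) * pay g.
Proof.
transitivity (\sum_f (if win f == win g then w f else 0) *
                     ((1 - rho (win g) * pay g) / p (win g))).
  apply: eq_bigr => f _; rewrite big_bool /= !loss_estE eq_sym.
  by case: eqP => [->|_]; rewrite /click_prob /=; ring.
rewrite -mulr_suml -big_mkcond /= mulrCA divff ?mulr1 //.
by rewrite gt_eqF ?winprob_gt0.
Qed.

Lemma round_expect_revenue_mixture_loss :
  round_expect (fun f c => c%:R * pay f + \sum_g w g * lh f c g) = 1.
Proof.
rewrite round_expectD round_expect_click round_expect_sum.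
under [X in _ + X]eq_bigr do rewrite round_expectZ loss_est_unbiased.
rewrite -big_split /= -[RHS]sum_weight; apply: eq_bigr => f _; ring.
Qed.

Lemma round_expect_second_moment :
  round_expect (fun f c => \sum_g w g * lh f c g ^+ 2) <= N%:R.
Proof.
have le_inv f c : \sum_g w g * lh f c g ^+ 2 <= (p (win f))^-1.
  have p_gt0 := winprob_gt0 f.
  have -> : (p (win f))^-1 = \sum_(g | win g == win f) w g / p (win f) ^+ 2.
    by rewrite -mulr_suml expr2 invfM mulrA divff ?mul1r ?gt_eqF.
  rewrite [X in _ <= X]big_mkcond /=; apply: ler_sum => g _; rewrite loss_estE.
  case: eqP => [->|_]; last by rewrite expr0n mulr0.
  rewrite ler_pM2l ?weight_gt0 // expr_div_n -[X in _ <= X]mul1r.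
  rewrite ler_pM2r ?invr_gt0 ?exprn_gt0 //.
  by case/andP: (click_loss_itv g c) => ? ?; rewrite exprn_ile1.
apply: le_trans (round_expect_le le_inv) _.
rewrite /round_expect; under eq_bigr do rewrite -mulr_suml sum_click_prob mul1r.
rewrite (partition_big win xpredT) //=.
apply: le_trans (_ : \sum_(i < N) 1 <= _); last by rewrite sumr_const card_ord.
apply: ler_sum => i _.
rewrite (eq_bigr (fun f => w f * (p i)^-1)); last by move=> f /eqP ->.
rewrite -mulr_suml -/(p i).
by have [->|/divff ->] := eqVneq (p i) 0; rewrite ?mul0r.
Qed.

Hypothesis eta_gt0 : 0 < eta.

Lemma round_step (fs : F) (K : R) (X : F -> bool -> R) :
  (forall f c, X f c <= potential eta fs (fun g => L g + lh f c g) + K) ->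
  round_expect (fun f c => smax_val asm b rho - c%:R * pay f + X f c) <=
  potential eta fs L + eta * N%:R + (smax_val asm b rho - rho (win fs) * pay fs) + K.
Proof.
move=> le_X.
set smax := smax_val asm b rho.
pose mix_loss f c := \sum_g w g * lh f c g.
pose moment f c := \sum_g w g * lh f c g ^+ 2.
have le_pot f (c : bool) : smax - c%:R * pay f + X f c <=
    (potential eta fs L + K + smax + eta * moment f c + lh f c fs) -
    (c%:R * pay f + mix_loss f c).
  have := potentialD (card_theta_class_gt0 N T) fs eta_gt0 L (loss_est_ge0 f c).
  rewrite -weightE /moment /mix_loss; have := le_X f c; lra.
apply: le_trans (round_expect_le le_pot) _.
rewrite round_expectB round_expect_revenue_mixture_loss !round_expectD !round_expect_const.
rewrite round_expectZ loss_est_unbiased.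
have := ler_wpM2l (ltW eta_gt0) round_expect_second_moment.
rewrite /potential /moment; lra.
Qed.

End Round.

Section Regret.
Variables (R : realType) (N T : nat) (am asm : ('I_N -> R) -> 'I_N).
Hypothesis am_max : is_argmax am.
Variables (eta : R) (rho : 'I_N -> R) (adv : adversary R N T).
Hypotheses (eta_gt0 : 0 < eta) (rho01 : forall i, 0 <= rho i <= 1).
Hypothesis adv01 : forall h i, 0 <= adv h i <= 1.
Variables (fs : theta_class N T) (e : R).
Hypothesis fs_regret : forall b : 'I_N -> R, (forall i, 0 <= b i <= 1) ->
  smax_val asm b rho - rho (winner am b fs) * payment am asm b fs <= e.

Lemma exp_regret_le k hist L :
  exp_regret am asm eta rho adv k hist L <= potential eta fs L + k%:R * (eta * N%:R + e).
Proof.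
elim: k hist L => [|k IH] hist L.
  by rewrite mul0r addr0 potential_ge0 ?card_theta_class_gt0.
apply: le_trans (round_step am_max rho01 (adv01 hist) eta_gt0 (fun f c => IH _ _)) _.
have := fs_regret (adv01 hist); rewrite -natr1 mulrDl mul1r; lra.
Qed.

End Regret.

Section Comparator.
Variables (R : realType) (N : nat) (am asm : ('I_N -> R) -> 'I_N).
Hypotheses (am_max : is_argmax am) (asm_smax : is_argsmax am asm).

Lemma smax_le_add (v v' : 'I_N -> R) (e : R) :
  (forall i, v i <= v' i + e) -> v (asm v) <= v' (asm v') + e.
Proof.
move=> le_vv'; have [_ smax_v'] := asm_smax v'.
case: (eqVneq (asm v) (am v')) => [asmv_eq|asmv_neq]; last first.
  by apply: le_trans (le_vv' _) _; rewrite lerD2r smax_v'.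
(* If asm v maximizes v', go through am v, which then differs from am v'. *)
have amv_neq : am v != am v' by rewrite -asmv_eq eq_sym; case: (asm_smax v).
have := am_max v (asm v); have := le_vv' (am v); have := smax_v' _ amv_neq; lra.
Qed.

Lemma comparator_regret_le (T : nat) (rho b : 'I_N -> R) (f : theta_class N T) (e : R) :
  (forall i, 0 <= b i <= 1) -> (forall i, pred_of R f i <= rho i <= pred_of R f i + e) ->
  smax_val asm b rho - rho (winner am b f) * payment am asm b f <= e.
Proof.
move=> b01 f_approx.
rewrite /payment /winner; set v := scores b f; set i := am v.
have le_smax : smax_val asm b rho <= v (asm v) + e.
  apply: (smax_le_add (v := fun j => b j * rho j)) => j; rewrite /v /scores.
  have /andP[le_fr le_rf] := f_approx j; have /andP[b_ge0 b_le1] := b01 j.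
  have := pred_of_ge0 R f j; nra.
have v_ge0 : 0 <= v (asm v) by rewrite scores_ge0.
have /andP[le_fr _] := f_approx i.
have [pi_eq0|pi_neq0] := eqVneq (pred_of R f i) 0.
  have : v (asm v) <= 0 by rewrite -[0](mulr0 (b i)) -pi_eq0; exact: am_max.
  rewrite pi_eq0 invr0 !mulr0 subr0; lra.
have pi_gt0 : 0 < pred_of R f i by rewrite lt_def pi_neq0 pred_of_ge0.
have : v (asm v) <= rho i * (v (asm v) / pred_of R f i).
  by rewrite mulrCA ler_peMr // ler_pdivlMr ?mul1r.
lra.
Qed.

End Comparator.

Definition floor_theta (R : realType) (N T : nat) (rho : 'I_N -> R) : theta_class N T :=
  [ffun i => insubd ord0 (Num.truncn (rho i * T%:R))].

Lemma floor_theta_approx (R : realType) (N T : nat) (rho : 'I_N -> R) :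
  (0 < T)%N -> (forall i, 0 <= rho i <= 1) ->
  forall i, pred_of R (floor_theta T rho) i <= rho i <= pred_of R (floor_theta T rho) i + T%:R^-1.
Proof.
move=> T_gt0 rho01 i; have /andP[rho_ge0 rho_le1] := rho01 i.
have T_pos : (0 : R) < T%:R by rewrite ltr0n.
set n := Num.truncn (rho i * T%:R).
have /andP[n_le n_gt] : n%:R <= rho i * T%:R < n.+1%:R by rewrite truncn_itv ?mulr_ge0 ?ler0n.
have n_small : (n < T.+1)%N.
  by rewrite ltnS -(ler_nat R); apply: le_trans n_le _; rewrite ler_piMl ?ler0n.
have -> : pred_of R (floor_theta T rho) i = n%:R / T%:R.
  by rewrite /pred_of ffunE val_insubd n_small.
have -> : n%:R / T%:R + T%:R^-1 = n.+1%:R / T%:R :> R by rewrite -natr1 mulrDl mul1r.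
by rewrite ler_pdivrMr // ler_pdivlMr // n_le ltW.
Qed.

Lemma tuned_rate_le (R : realType) (t n : R) : 2 <= t -> 1 <= n ->
  n * ln (t + 1) / Num.sqrt (ln t / t) + t * (Num.sqrt (ln t / t) * n + t^-1) <=
  4 * n * Num.sqrt (t * ln t).
Proof.
move=> t_ge2 n_ge1; have t_gt0 : 0 < t by lra.
have lnt_ge : 1 / 2 <= ln t.
  have := expR_ge1Dx (- ln t); rewrite expRN lnK ?posrE //.
  have : t^-1 <= 2^-1 by rewrite lef_pV2 ?posrE //; lra.
  lra.
have ln_t1 : ln (t + 1) <= 2 * ln t.
  have -> : 2 * ln t = ln (t ^+ 2) by rewrite lnXn // mulr_natl.
  rewrite ler_ln ?posrE ?exprn_gt0 ?addr_gt0 // expr2; nra.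
set s := Num.sqrt (t * ln t).
have s2 : s ^+ 2 = t * ln t by rewrite sqr_sqrtr // mulr_ge0 ?ltW //; lra.
have s_ge1 : 1 <= s.
  have s_ge0 : 0 <= s by exact: sqrtr_ge0.
  move: s2; rewrite expr2; nra.
have -> : Num.sqrt (ln t / t) = s / t.
  have -> : ln t / t = (s / t) ^+ 2 by rewrite expr_div_n s2 expr2; field; lra.
  by rewrite sqrtr_sqr ger0_norm // divr_ge0 ?ltW //; lra.
have -> : n * ln (t + 1) / (s / t) + t * (s / t * n + t^-1) =
          n * (ln (t + 1) * t) / s + n * s + 1.
  by field; apply/andP; split; lra.
have : n * (ln (t + 1) * t) / s <= 2 * n * s.
  rewrite ler_pdivrMr; last lra.
  have : ln (t + 1) * t <= 2 * s ^+ 2 by rewrite s2; nra.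
  rewrite expr2; nra.
nra.
Qed.

Theorem corollary1 (R : realType) :
  exists C : R, 0 < C /\
  forall (N T : nat) (am asm : ('I_N -> R) -> 'I_N),
    (2 <= N)%N -> (2 <= T)%N ->
    is_argmax am -> is_argsmax am asm ->
    forall rho : 'I_N -> R, (forall i, 0 <= rho i <= 1) ->
    forall adv : adversary R N T,
      (forall h i, 0 <= adv h i <= 1) ->
      expected_regret am asm rho adv <= C * N%:R * Num.sqrt (T%:R * ln T%:R).
Proof.
exists 4; split => // N T am asm N_ge2 T_ge2 am_max asm_smax rho rho01 adv adv01.
have t_ge2 : (2 : R) <= T%:R by rewrite ler_nat.
have n_ge1 : (1 : R) <= N%:R by rewrite ler1n ltnW.
rewrite /expected_regret; set eta := Num.sqrt _.
have eta_gt0 : 0 < eta by rewrite sqrtr_gt0 divr_gt0 ?ln_gt0; lra.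
have fs_regret b (b01 : forall i, 0 <= b i <= 1) :=
  comparator_regret_le am_max asm_smax b01 (floor_theta_approx (ltnW T_ge2) rho01).
apply: le_trans (exp_regret_le am_max eta_gt0 rho01 adv01 fs_regret T [::] (fun _ => 0)) _.
rewrite potential0 card_ffun !card_ord natrX lnXn ?ltr0n // -[ln _ *+ N]mulr_natl -natr1.
exact: tuned_rate_le.
Qed.
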